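(* Let $k\ge1$, let $\Gamma=\mathbb{Z}_2\,\mathrm{wr}\,\mathbb{Z}^k=\Sigma\rtimes_\alpha\mathbb{Z}^k$, let $\phi:\Gamma\to\Gamma$ be an automorphism, let $\phi'=\phi|_\Sigma$ and let $\overline{\phi}:\mathbb{Z}^k\to\mathbb{Z}^k$ be the automorphism induced on $\Gamma/\Sigma\cong\mathbb{Z}^k$. Let $x_0\in\mathbb{Z}^k$ be the element with $\phi'(\delta_0)=\delta_{x_0}$ (so that $\phi'(\delta_y)=\delta_{\overline{\phi}(y)+x_0}$ for all $y\in\mathbb{Z}^k$). If $\delta_{x_1}$ and $\delta_{x_2}$ ($x_1,x_2\in\mathbb{Z}^k$) belong to the same Reidemeister class of $\phi'$, then for some integer $t\ge0$ either $$\overline{\phi}^t(x_1)+\overline{\phi}^{t-1}(x_0)+\dots+\overline{\phi}(x_0)+x_0=x_2$$ or $$\overline{\phi}^t(x_2)+\overline{\phi}^{t-1}(x_0)+\dots+\overline{\phi}(x_0)+x_0=x_1$$ (for $t=0$ the sum of the $x_0$-terms is empty).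
   Context: $\mathbb{Z}_2\,\mathrm{wr}\,\mathbb{Z}^k$ is $\Sigma\rtimes_\alpha\mathbb{Z}^k$ with $\Sigma=\bigoplus_{x\in\mathbb{Z}^k}(\mathbb{Z}_2)_{(x)}$ (finitely supported), $\delta_x$ the nontrivial element of $(\mathbb{Z}_2)_{(x)}$, and $\alpha(y)(\delta_x)=\delta_{y+x}$. $\Sigma$ is characteristic (the torsion subgroup), so $\phi$ restricts to $\phi'$ on $\Sigma$ and induces $\overline\phi$ on the quotient $\mathbb{Z}^k$; $\phi'$ maps each $\delta_0$ to a single $\delta_{x_0}$. Reidemeister classes of an automorphism $\psi$ of a group $G$ are the classes of the relation $g\sim hg\psi(h^{-1})$. *)

From HB Require Import structures.
From mathcomp Require Import all_boot all_order all_algebra.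
From mathcomp Require Import finmap.
Set Implicit Arguments. Unset Strict Implicit. Unset Printing Implicit Defensive.
Import GRing.Theory.
Local Open Scope ring_scope.
Local Open Scope fset_scope.

Notation Zk k := 'rV[int]_k.

(* Sigma = finitely supported functions Z^k -> Z_2, represented by their
   (finite) support; the group law is symmetric difference. *)
Definition Sigma (k : nat) := {fset Zk k}.

Definition symdiff (k : nat) (A B : Sigma k) : Sigma k := (A `\` B) `|` (B `\` A).

Definition alpha (k : nat) (y : Zk k) (A : Sigma k) : Sigma k :=
  [fset (y + x)%R | x in A].

Definition Gamma (k : nat) := (Sigma k * Zk k)%type.

Definition gmul (k : nat) (a b : Gamma k) : Gamma k :=
  (symdiff a.1 (alpha a.2 b.1), (a.2 + b.2)%R).
Definition gone (k : nat) : Gamma k := (fset0, 0%R).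
Definition ginv (k : nat) (a : Gamma k) : Gamma k :=
  (alpha (- a.2)%R a.1, (- a.2)%R).

Definition ofSigma (k : nat) (A : Sigma k) : Gamma k := (A, 0%R).

Definition delta (k : nat) (x : Zk k) : Gamma k := ofSigma [fset x].

Definition is_aut (k : nat) (phi : Gamma k -> Gamma k) : Prop :=
  bijective phi /\ forall a b, phi (gmul a b) = gmul (phi a) (phi b).

(* the automorphism induced on Gamma / Sigma = Z^k (quotient map = 2nd projection) *)
Definition phibar (k : nat) (phi : Gamma k -> Gamma k) (y : Zk k) : Zk k :=
  (phi (fset0, y)).2.

Definition reid_rel_Sigma (k : nat) (phi : Gamma k -> Gamma k) (g g' : Gamma k) : Prop :=
  exists H : Sigma k, g' = gmul (gmul (ofSigma H) g) (phi (ginv (ofSigma H))).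

(* Reidemeister class relation: the equivalence closure (the relation above is
   already an equivalence relation, but we take the closure to be safe). *)
Inductive same_reid_class (k : nat) (phi : Gamma k -> Gamma k) : Gamma k -> Gamma k -> Prop :=
  | srcl_step g g' : reid_rel_Sigma phi g g' -> same_reid_class phi g g'
  | srcl_refl g : same_reid_class phi g g
  | srcl_sym g g' : same_reid_class phi g g' -> same_reid_class phi g' g
  | srcl_trans g g' g'' : same_reid_class phi g g' -> same_reid_class phi g' g'' ->
      same_reid_class phi g g''.

(* Since Z^k is torsion free, phi maps Sigma into itself, and the conjugation
   formula delta_y = (0, y) delta_0 (0, y)^-1 gives phi'(delta_y) = delta_(psi y)
   for the injective affine map psi y = phibar y + x0; so phi' acts on supports
   as H |-> psi(H).  As Sigma is an elementary abelian 2-group, delta_x1 and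
   delta_x2 are phi'-conjugate iff {x1} + {x2} = H + psi(H) (symmetric
   differences) for a finite H.  If x1 <> x2, one of them, y, lies in
   H \ psi(H): otherwise H is contained in psi(H), hence equal to it by
   counting.  The psi-orbit of y cannot stay in the finite set H, for then
   injectivity would bring it back to y and put y in psi(H); the first point of
   the orbit outside H lies in psi(H) \ H, so it is the other x_i.  Finally
   psi^t x = phibar^t x + phibar^(t-1) x0 + ... + x0. *)
From HB Require Import structures.
From mathcomp Require Import all_boot all_order all_algebra.
From mathcomp Require Import finmap.

Set Implicit Arguments. Unset Strict Implicit. Unset Printing Implicit Defensive.
Import GRing.Theory Num.Theory.
Local Open Scope fset_scope.

Section InjectiveOrbits.
Variables (T : choiceType) (f : T -> T).
Hypothesis f_inj : injective f.

Lemma iter_inj n : injective (iter n f).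
Proof. by elim: n => [|n IHn] x y //= /f_inj /IHn. Qed.

Lemma orbit_leaves_fset (H : {fset T}) y : y \notin f @` H ->
  exists n, iter n f y \notin H.
Proof.
move=> yNfH; pose N := #|` H|.+1.
case: (pickP (fun n : 'I_N => iter n f y \notin H)) => [n nH | orbitH].
  by exists n.
have orbit_in_H n : (n < N)%N -> iter n f y \in H.
  by move=> lt_nN; apply/negPn; rewrite (orbitH (Ordinal lt_nN)).
pose s := mkseq (fun n => iter n f y) N.
have /(uniqPn y) [i [j [lt_ij lt_js]]] : ~~ uniq s.
  apply/negP => uniq_s.
  have sub_sH : {subset s <= enum_fset H}.
    move=> z /mapP[n]; rewrite mem_iota => /andP[_ lt_nN] ->.
    exact: orbit_in_H.
  by have := uniq_leq_size uniq_s sub_sH; rewrite size_mkseq ltnn.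
rewrite size_mkseq in lt_js.
rewrite !nth_mkseq ?(ltn_trans lt_ij) // -(subnKC (ltnW lt_ij)) iterD.
move=> /iter_inj yE; have d_gt0 : (0 < j - i)%N by rewrite subn_gt0.
suff : y \in f @` H by rewrite (negPf yNfH).
rewrite [in X in X \in _]yE -(prednK d_gt0) iterS in_imfset // orbit_in_H //.
by rewrite (leq_ltn_trans _ lt_js) // (leq_trans (leq_pred _)) ?leq_subr.
Qed.

Lemma orbit_exits_fset (H : {fset T}) y : y \in H -> y \notin f @` H ->
  exists n, (iter n f y \in f @` H) && (iter n f y \notin H).
Proof.
move=> yH /orbit_leaves_fset/ex_minnP[[|m] mNH min_m]; first by rewrite yH in mNH.
exists m.+1; rewrite mNH andbT iterS in_imfset //.
by apply/negPn/negP => /min_m; rewrite ltnn.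
Qed.

Lemma iter_connects_symdiff (H : {fset T}) x1 x2 :
  (forall u, (u == x1) (+) (u == x2) = (u \in H) (+) (u \in f @` H)) ->
  exists n, iter n f x1 = x2 \/ iter n f x2 = x1.
Proof.
move=> Hx12; have [<-|x12] := eqVneq x1 x2; first by exists 0%N; left.
have [y yH yNfH] : exists2 y, y \in H & y \notin f @` H.
  apply/fsubsetPn/negP => sub_HfH.
  have /fsubset_cardP/(_ sub_HfH) eq_HfH : #|` H| = #|` f @` H|.
    by rewrite card_imfset.
  by move: (Hx12 x1); rewrite eq_HfH addbb eqxx (negPf x12).
have [n /andP[zfH zNH]] := orbit_exits_fset yH yNfH.
have zNy : iter n f y != y by apply: contraNneq zNH => ->.
have := Hx12 (iter n f y); rewrite zfH (negPf zNH) => z_x12.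
exists n; have [yx1 | yNx1] := eqVneq y x1.
  by left; move: z_x12; rewrite -yx1 (negPf zNy) => /eqP.
have := Hx12 y; rewrite yH (negPf yNfH) (negPf yNx1) => /eqP yx2.
by right; move: z_x12; rewrite -yx2 (negPf zNy) addbF => /eqP.
Qed.

End InjectiveOrbits.

Local Open Scope ring_scope.

Lemma in_symdiff k (A B : Sigma k) x :
  (x \in symdiff A B) = (x \in A) (+) (x \in B).
Proof. by rewrite in_fsetU !in_fsetD; case: (x \in A); case: (x \in B). Qed.

Lemma symdiffvv k (A : Sigma k) : symdiff A A = fset0.
Proof. by apply/fsetP => u; rewrite in_symdiff addbb. Qed.

Lemma symdiff_eq0 k (A B : Sigma k) : symdiff A B = fset0 -> A = B.
Proof.
move=> /fsetP eAB; apply/fsetP => u; move: (eAB u).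
by rewrite in_symdiff in_fset0; case: (u \in A); case: (u \in B).
Qed.

Lemma symdiff_fset1U k (x : Zk k) (X : Sigma k) : x \notin X ->
  x |` X = symdiff [fset x] X.
Proof.
move=> xNX; apply/fsetP => u; rewrite in_symdiff !inE.
by have [->|] := eqVneq u x; first rewrite (negPf xNX).
Qed.

Lemma alpha0 k (A : Sigma k) : alpha 0 A = A.
Proof.
apply/fsetP => x; apply/imfsetP/idP => [[y yA ->]|xA]; first by rewrite add0r.
by exists x; rewrite ?add0r.
Qed.

Lemma alpha_fset0 k (y : Zk k) : alpha y fset0 = fset0.
Proof. exact: imfset0. Qed.

Lemma alpha_fset1 k (y x : Zk k) : alpha y [fset x] = [fset y + x].
Proof. exact: imfset_fset1. Qed.

Lemma alphaK k (y : Zk k) (A : Sigma k) : alpha y (alpha (- y) A) = A.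
Proof.
apply/fsetP => x; apply/imfsetP/idP => [[_ /imfsetP[z zA ->] ->]|xA].
  by rewrite addNKr.
by exists (- y + x); [apply/imfsetP; exists x | rewrite addNKr].
Qed.

Lemma gmul_eq1 k (a b : Gamma k) : gmul a b = gone k -> b = ginv a.
Proof.
case: a b => [A y] [B z] [/symdiff_eq0 eAB /eqP yz0].
have -> : z = - y by apply/eqP; rewrite -addr_eq0 addrC.
by rewrite /ginv /= eAB -{1}(alphaK (- y) B) opprK.
Qed.

Lemma gmul_idem k (a : Gamma k) : gmul a a = a -> a = gone k.
Proof.
case: a => A y [eA /eqP]; rewrite -subr_eq0 addrK => /eqP y0.
by move: eA; rewrite /gone y0 alpha0 symdiffvv => <-.
Qed.

Lemma gmul_sqr_eq1 k (a : Gamma k) : gmul a a = gone k -> a.2 = 0.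
Proof.
case: a => A y [_ y2_0] /=; apply/matrixP => i j; move/matrixP: y2_0 => /(_ i j).
by rewrite !mxE -mulr2n => /eqP; rewrite mulrn_eq0 => /eqP.
Qed.

Lemma gmulV k (a : Gamma k) : gmul a (ginv a) = gone k.
Proof.
by case: a => A y; rewrite /gmul /ginv /gone /= alphaK subrr symdiffvv.
Qed.

Lemma gconj_delta k (a : Gamma k) x :
  gmul (gmul a (delta x)) (ginv a) = delta (a.2 + x).
Proof.
case: a => A y; rewrite /gmul /ginv /delta /ofSigma /=.
rewrite alpha_fset1 addr0 alphaK subrr.
by congr (_, _); apply/fsetP => u; rewrite !in_symdiff addbC addbA addbb.
Qed.

Section Automorphism.
Variables (k : nat) (phi : Gamma k -> Gamma k).
Hypothesis phi_aut : is_aut phi.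

Lemma aut_gmul a b : phi (gmul a b) = gmul (phi a) (phi b).
Proof. exact: phi_aut.2. Qed.

Lemma aut_gone : phi (gone k) = gone k.
Proof.
apply: gmul_idem; rewrite -aut_gmul; congr phi.
by rewrite /gmul /= alpha_fset0 addr0 symdiffvv.
Qed.

Lemma aut_ginv a : phi (ginv a) = ginv (phi a).
Proof. by apply: gmul_eq1; rewrite -aut_gmul gmulV aut_gone. Qed.

Lemma phibarD : {morph phibar phi : y z / y + z}.
Proof.
move=> y z; rewrite /phibar.
have -> : (fset0, y + z) = gmul (fset0, y) (fset0, z) :> Gamma k.
  by rewrite /gmul /= alpha_fset0 symdiffvv.
by rewrite aut_gmul.
Qed.

Lemma phibar0 : phibar phi 0 = 0.
Proof. by rewrite /phibar -/(gone k) aut_gone. Qed.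

Lemma phibar_sum n (F : nat -> Zk k) :
  phibar phi (\sum_(i < n) F i) = \sum_(i < n) phibar phi (F i).
Proof. exact: (big_morph (phibar phi) phibarD phibar0). Qed.

Definition phiSigma (A : Sigma k) : Sigma k := (phi (A, 0)).1.

Lemma aut_Sigma (A : Sigma k) : phi (A, 0) = (phiSigma A, 0).
Proof.
rewrite [LHS]surjective_pairing; congr (_, _); apply: gmul_sqr_eq1.
by rewrite -aut_gmul -aut_gone /gmul /gone /= alpha0 symdiffvv addr0.
Qed.

Lemma phiSigma_symdiff (A B : Sigma k) :
  phiSigma (symdiff A B) = symdiff (phiSigma A) (phiSigma B).
Proof.
rewrite /phiSigma; have -> : (symdiff A B, 0) = gmul (A, 0) (B, 0).
  by rewrite /gmul /= alpha0 addr0.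
by rewrite aut_gmul !aut_Sigma /= alpha0.
Qed.

Lemma phiSigma0 : phiSigma fset0 = fset0.
Proof. by rewrite /phiSigma -/(gone k) aut_gone. Qed.

(* [same_reid_class] relates arbitrary elements of Gamma, so the invariant has
   to say something outside Sigma as well. *)
Lemma reid_class_Sigma g g' : same_reid_class phi g g' ->
  g.2 = g'.2 /\
  (g.2 = 0 -> exists H, g'.1 = symdiff g.1 (symdiff H (phiSigma H))).
Proof.
elim=> {g g'} [g _ [H ->] | g | g g' _ [e2 e1] | g g' g'' _ [e2 e1] _ [f2 f1]].
- rewrite /ginv /= oppr0 alpha0 aut_Sigma /gmul /= alpha0 add0r addr0.
  split=> // g0; exists H; rewrite g0 alpha0.
  by apply/fsetP => u; rewrite !in_symdiff -addbA addbCA.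
- split=> // _; exists fset0; rewrite phiSigma0 symdiffvv.
  by apply/fsetP => u; rewrite in_symdiff in_fset0 addbF.
- split=> // g0; have [H ->] := e1 (etrans e2 g0); exists H.
  by apply/fsetP => u; rewrite !in_symdiff addbK.
- split; first exact: etrans e2 f2.
  move=> g0; have [H eH] := e1 g0; have [K ->] := f1 (etrans (esym e2) g0).
  exists (symdiff H K); rewrite eH phiSigma_symdiff.
  apply/fsetP => u; rewrite !in_symdiff.
  by do ![case: (_ \in _)].
Qed.

Variable x0 : Zk k.
Hypothesis phi_delta0 : phi (delta 0) = delta x0.

Definition supp_map (y : Zk k) : Zk k := phibar phi y + x0.

Lemma aut_delta y : phi (delta y) = delta (supp_map y).
Proof.
have -> : delta y = gmul (gmul (fset0, y) (delta 0)) (ginv (fset0, y)).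
  by rewrite gconj_delta addr0.
by rewrite !aut_gmul aut_ginv phi_delta0 gconj_delta.
Qed.

Lemma supp_map_inj : injective supp_map.
Proof.
move=> y z eyz; have [[psi phiK _] _] := phi_aut.
have : delta y = delta z by rewrite -[delta y]phiK -[delta z]phiK !aut_delta eyz.
by case=> /fset1_inj.
Qed.

Lemma phiSigma_imfset H : phiSigma H = supp_map @` H.
Proof.
elim/fset1U_rect: H => [|x X xNX IHX]; first by rewrite phiSigma0 imfset0.
rewrite imfsetU1 (symdiff_fset1U xNX) symdiff_fset1U; last first.
  by rewrite mem_imfset //; exact: supp_map_inj.
rewrite phiSigma_symdiff IHX; congr symdiff.
by rewrite /phiSigma -/(ofSigma [fset x]) -/(delta x) aut_delta.
Qed.

Lemma iter_supp_map n y :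
  iter n supp_map y = iter n (phibar phi) y + \sum_(i < n) iter i (phibar phi) x0.
Proof.
elim: n => [|n IHn]; first by rewrite big_ord0 addr0.
rewrite iterS IHn /supp_map phibarD phibar_sum big_ord_recl /= -addrA.
by rewrite [x0 + _]addrC.
Qed.

End Automorphism.

Theorem lemma2p2 (k : nat) (hk : (0 < k)%N) (phi : Gamma k -> Gamma k)
  (hphi : is_aut phi) (x0 : 'rV[int]_k) (hx0 : phi (delta 0) = delta x0)
  (x1 x2 : 'rV[int]_k) :
  same_reid_class phi (delta x1) (delta x2) ->
  exists t : nat,
    iter t (phibar phi) x1 + \sum_(i < t) iter i (phibar phi) x0 = x2 \/
    iter t (phibar phi) x2 + \sum_(i < t) iter i (phibar phi) x0 = x1.
Proof.
move=> /(reid_class_Sigma hphi) [_ /(_ erefl) [H /= /fsetP x2E]].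
have x12E u :
    (u == x1) (+) (u == x2) = (u \in H) (+) (u \in supp_map phi x0 @` H).
  by rewrite -(phiSigma_imfset hphi hx0) -!in_fset1 x2E !in_symdiff addKb.
have [t] := iter_connects_symdiff (supp_map_inj hphi hx0) x12E.
by exists t; rewrite -!iter_supp_map.
Qed.
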